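(* Let $\mathcal{G}$ be the complete digraph on $n\ge 3$ nodes (all ordered pairs including self-loops are edges) and let $\tau\in\{1,\dots,n-1\}$. Let $\mathbb{V}=\max_P\min_{i,j}\mathbb{P}(T_{ij}(P)\le\tau)$, the maximum over all row-stochastic nonnegative $P\in\mathbb{R}^{n\times n}$. Then the random walk strategy $P=\frac1n\mathbb{1}_n\mathbb{1}_n^\top$ satisfies $$\min_{i,j}\mathbb{P}(T_{ij}(P)\le\tau)\ \ge\ \frac{n^\tau-(n-1)^\tau}{\tau n^{\tau-1}}\,\mathbb{V},\qquad\text{and}\qquad \frac{n^\tau-(n-1)^\tau}{\tau n^{\tau-1}}\ge 1-\frac1e,$$ where $e$ is Euler's number.
   Context: For a Markov chain $(X_k)_{k\ge0}$ with transition matrix $P$, $T_{ij}=\min\{k\ge1: X_k=j\}$ given $X_0=i$. ''Performance within a factor $f$ of optimality'' means the strategy's value is at least $f$ times the optimal value $\mathbb{V}$. *)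

From HB Require Import structures.
From mathcomp Require Import all_boot all_order all_algebra.
From mathcomp Require Import all_classical all_reals all_analysis.
Set Implicit Arguments. Unset Strict Implicit. Unset Printing Implicit Defensive.
Import Order.TTheory GRing.Theory Num.Theory.
Local Open Scope ring_scope.

Definition stochastic (R : realType) (n : nat) (P : 'M[R]_n) : Prop :=
  (forall i j, 0 <= P i j) /\ (forall i, \sum_(j < n) P i j = 1).

(* nohit P j t i = P(X_1 <> j, ..., X_t <> j | X_0 = i), i.e. P(T_ij > t),
   computed by conditioning on the first step (sum over paths avoiding j). *)
Fixpoint nohit (R : realType) (n : nat) (P : 'M[R]_n) (j : 'I_n) (t : nat)
  (i : 'I_n) : R :=
  match t with
  | O => 1
  | t'.+1 => \sum_(l < n | l != j) P i l * nohit P j t' l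
  end.

(* P(T_ij <= tau) where T_ij = min{k >= 1 : X_k = j}, X_0 = i. *)
Definition hitprob (R : realType) (n : nat) (P : 'M[R]_n) (tau : nat)
  (i j : 'I_n) : R := 1 - nohit P j tau i.

(* min_{i,j} P(T_ij(P) <= tau)  (values are <= 1 for stochastic P, so the
   neutral element 1 of the min is harmless; n >= 1 in our use). *)
Definition minhit (R : realType) (n : nat) (P : 'M[R]_n) (tau : nat) : R :=
  \big[Num.min/1]_(i < n) \big[Num.min/1]_(j < n) hitprob P tau i j.

Definition optval (R : realType) (n : nat) (tau : nat) : R :=
  sup [set minhit P tau | P in [set P : 'M[R]_n | stochastic P]].

Definition rw (R : realType) (n : nat) : 'M[R]_n :=
  \matrix_(i < n, j < n) (n%:R)^-1.

From HB Require Import structures.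
From mathcomp Require Import all_boot all_order all_algebra.
From mathcomp Require Import all_classical all_reals all_analysis.
From mathcomp Require Import ring.
Import Order.TTheory GRing.Theory Num.Theory.
Set Implicit Arguments. Unset Strict Implicit.
Local Open Scope ring_scope.

(* Upper bound: from any start i, the expected number of distinct nodes hit
   within t steps is at most t, i.e. sum_j P(T_ij <= t) <= t; so some j has
   P(T_ij <= t) <= t/n and V <= tau/n.  The random walk hits every j within
   tau steps with probability 1 - y^tau, y = 1 - 1/n, and
   (1 - y^tau) / (tau/n) is the stated ratio.  That ratio is the mean of
   1, y, ..., y^(tau-1); since the powers decrease and tau <= n, it is at
   least the mean of the first n powers, which is 1 - y^n >= 1 - 1/e. *)

Lemma subr1X (R : pzRingType) (x : R) (m : nat) :
  1 - x ^+ m = (1 - x) * \sum_(k < m) x ^+ k.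
Proof. by rewrite -opprB subrX1 -mulNr opprB. Qed.

Lemma mean_exprn_antitone (R : realDomainType) (y : R) (t m : nat) :
  0 <= y <= 1 -> (t <= m)%N ->
  t%:R * \sum_(k < m) y ^+ k <= m%:R * \sum_(k < t) y ^+ k.
Proof.
case/andP=> y0 y1 /subnKC <-; elim: (m - t)%N => [|d IH]; first by rewrite addn0.
rewrite addnS big_ord_recr /= mulrDr -addn1 natrD mulrDl mul1r lerD //.
rewrite mulr_natl -[t in _ *+ t]card_ord -sumr_const.
by apply: ler_sum => k _; rewrite ler_wiXn2l // ltnW // ltn_addr.
Qed.

Lemma onem_invn_itv (R : numFieldType) (n : nat) : (0 < n)%N ->
  0 <= 1 - (n%:R : R)^-1 <= 1.
Proof.
move=> n0; rewrite subr_ge0 invf_le1 ?ltr0n // ler1n n0.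
by rewrite lerBlDr lerDl invr_ge0 ler0n.
Qed.

Lemma exprn_onem_inv_le_expR (R : realType) (n : nat) : (0 < n)%N ->
  (1 - n%:R^-1) ^+ n <= (expR (1 : R))^-1.
Proof.
move=> n0; have n_neq0 : n%:R != 0 :> R by rewrite pnatr_eq0 -lt0n.
have le_expR : 1 - n%:R^-1 <= expR (- n%:R^-1 : R) by exact: expR_ge1Dx.
apply: (le_trans (lerXn2r n _ _ le_expR)); rewrite ?nnegrE ?expR_ge0 //.
  by case/andP: (onem_invn_itv R n0).
by rewrite -expRM_natl mulrN mulfV // expRN.
Qed.

Section HittingProbabilities.
Variables (R : realType) (n : nat) (P : 'M[R]_n).
Hypothesis P_stochastic : stochastic P.

Lemma nohit_le1 j t i : nohit P j t i <= 1.
Proof.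
case: P_stochastic => P_ge0 P_sum1; elim: t i => [|t IH] i //=.
rewrite -(P_sum1 i) [leRHS](bigID (fun l => l != j)) /=.
apply: ler_wpDr; first exact: sumr_ge0.
by apply: ler_sum => l _; rewrite ler_piMr.
Qed.

Lemma hitprobS j t i :
  hitprob P t.+1 i j = P i j + \sum_(l < n | l != j) P i l * hitprob P t l j.
Proof.
case: P_stochastic => _ P_sum1.
rewrite /hitprob /= -{1}(P_sum1 i) (bigD1 j) //= -addrA; congr (_ + _).
by rewrite -sumrB; apply: eq_bigr => l _; rewrite mulrBr mulr1.
Qed.

Lemma sum_hitprob_le t i : \sum_(j < n) hitprob P t i j <= t%:R.
Proof.
case: P_stochastic => P_ge0 P_sum1.
have hit_ge0 s l j : 0 <= hitprob P s l j by rewrite subr_ge0 nohit_le1.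
elim: t i => [|t IH] i.
  by rewrite big1 // => j _; rewrite /hitprob subrr.
under eq_bigr do rewrite hitprobS.
rewrite big_split /= P_sum1 -natr1 addrC lerD2r.
apply: (@le_trans _ _ (\sum_(j < n) \sum_(l < n) P i l * hitprob P t l j)).
  by apply: ler_sum => j _; rewrite [X in _ <= X](bigD1 j) //= lerDr mulr_ge0.
rewrite exchange_big /= -[leRHS]mul1r -{1}(P_sum1 i) mulr_suml.
by apply: ler_sum => l _; rewrite -mulr_sumr ler_wpM2l.
Qed.

Lemma minhit_le t : (0 < n)%N -> minhit P t <= t%:R / n%:R.
Proof.
move=> n0; pose i0 := Ordinal n0.
have minhit_le_hit j : minhit P t <= hitprob P t i0 j.
  exact: le_trans (bigmin_le _ i0 _) (bigmin_le _ j _).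
rewrite ler_pdivlMr ?ltr0n // mulr_natr -[X in _ *+ X](card_ord n) -sumr_const.
exact: le_trans (ler_sum _ (fun j _ => minhit_le_hit j)) (sum_hitprob_le t i0).
Qed.

End HittingProbabilities.

Lemma rw_stochastic (R : realType) n : (0 < n)%N -> stochastic (rw R n).
Proof.
move=> n0; split => [i j|i]; first by rewrite mxE invr_ge0 ler0n.
under eq_bigr do rewrite mxE.
by rewrite sumr_const card_ord -[_ *+ n]mulr_natr mulVf // pnatr_eq0 -lt0n.
Qed.

Lemma optval_le (R : realType) n t : (0 < n)%N -> optval R n t <= t%:R / n%:R.
Proof.
move=> n0; apply: ge_sup; last by move=> _ [P /minhit_le Pt <-]; exact: Pt.
by exists (minhit (rw R n) t), (rw R n) => //; exact: rw_stochastic.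
Qed.

Lemma nohit_rw (R : realType) n j t i : (0 < n)%N ->
  nohit (rw R n) j t i = (1 - n%:R^-1) ^+ t.
Proof.
move=> n0; elim: t i => [|t IH] i //=.
under eq_bigr do rewrite IH mxE.
rewrite sumr_const.
have -> : #|[pred l : 'I_n | l != j]| = n.-1.
  by rewrite -[in RHS](card_ord n) -(cardC1 j); apply: eq_card.
rewrite exprS -mulrnAl; congr (_ * _).
apply/eqP; rewrite eq_sym subr_eq -mulrSr prednK // -[_ *+ n]mulr_natr.
by rewrite mulVf // pnatr_eq0 -lt0n.
Qed.

Lemma minhit_rw_ge (R : realType) n t : (0 < n)%N ->
  1 - (1 - n%:R^-1) ^+ t <= minhit (rw R n) t.
Proof.
move=> n0; have le1 : 1 - (1 - n%:R^-1) ^+ t <= 1 :> R.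
  by rewrite lerBlDr lerDl exprn_ge0 //; case/andP: (onem_invn_itv R n0).
apply: le_bigmin => // i _; apply: le_bigmin => // j _.
by rewrite /hitprob nohit_rw.
Qed.

Lemma diff_powers_ratioE (F : numFieldType) (N : F) (t : nat) : N != 0 -> (0 < t)%N ->
  (N ^+ t - (N - 1) ^+ t) / (t%:R * N ^+ t.-1)
    = (1 - (1 - N^-1) ^+ t) * (N / t%:R).
Proof.
move=> N0; case: t => // t _.
have -> : (1 - N^-1) ^+ t.+1 = (N - 1) ^+ t.+1 / N ^+ t.+1.
  by rewrite -expr_div_n; congr (_ ^+ _); field.
rewrite exprS /=; field.
by rewrite expf_neq0 // N0 addrC natr1 pnatr_eq0.
Qed.

Lemma ratio_ge_onem_inv_e (R : realType) (n t : nat) : (0 < t <= n)%N ->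
  1 - (expR (1 : R))^-1 <= (1 - (1 - n%:R^-1) ^+ t) * (n%:R / t%:R).
Proof.
case/andP=> t0 le_tn; have n0 := leq_trans t0 le_tn.
set y : R := 1 - n%:R^-1.
have y01 : 0 <= y <= 1 by exact: onem_invn_itv.
have onem_y : 1 - y = n%:R^-1 by rewrite /y opprB addrC subrK.
apply: (@le_trans _ _ (1 - y ^+ n)).
  by rewrite lerD2l lerN2 exprn_onem_inv_le_expR.
have n_neq0 : n%:R != 0 :> R by rewrite pnatr_eq0 -lt0n.
have t_neq0 : t%:R != 0 :> R by rewrite pnatr_eq0 -lt0n.
have -> : (1 - y ^+ t) * (n%:R / t%:R) = (\sum_(k < t) y ^+ k) / t%:R.
  by rewrite subr1X onem_y; field; rewrite t_neq0 n_neq0.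
rewrite subr1X onem_y mulrC ler_pdivlMr ?ltr0n // mulrAC ler_pdivrMr ?ltr0n //.
by rewrite mulrC [X in _ <= X]mulrC mean_exprn_antitone.
Qed.

Unset Implicit Arguments.
Theorem lemma2 (R : realType) (n tau : nat) (hn : (3 <= n)%N)
  (htau1 : (1 <= tau)%N) (htau2 : (tau <= n.-1)%N) :
  minhit (rw R n) tau >=
    ((n%:R ^+ tau - (n%:R - 1) ^+ tau) / (tau%:R * n%:R ^+ tau.-1))
      * optval R n tau
  /\ ((n%:R : R) ^+ tau - (n%:R - 1) ^+ tau) / (tau%:R * n%:R ^+ tau.-1)
      >= 1 - (expR (1 : R))^-1.
Proof.
have n0 : (0 < n)%N by apply: leq_trans hn.
have le_tau_n : (tau <= n)%N by apply: leq_trans htau2 (leq_pred n).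
rewrite diff_powers_ratioE ?pnatr_eq0 -?lt0n //.
split; last by apply: ratio_ge_onem_inv_e; rewrite htau1.
apply: le_trans (minhit_rw_ge R tau n0).
have [y_ge0 y_le1] := andP (onem_invn_itv R n0).
have ratio_ge0 : 0 <= (1 - (1 - n%:R^-1) ^+ tau) * (n%:R / tau%:R) :> R.
  by rewrite mulr_ge0 ?divr_ge0 // subr_ge0 exprn_ile1.
apply: le_trans (ler_wpM2l ratio_ge0 (optval_le R tau n0)) _.
have tau_neq0 : tau%:R != 0 :> R by rewrite pnatr_eq0 -lt0n.
have n_neq0 : n%:R != 0 :> R by rewrite pnatr_eq0 -lt0n.
by rewrite -mulrA [n%:R / _ * _]mulrA divfK // mulfV // mulr1.
Qed.
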